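(* Let $A\in\mathbb{R}^{n\times n}$ have rank one. Then $A$ is a Karamardian matrix if and only if its group inverse $A^{\#}$ (which exists in this case) is a Karamardian matrix. Moreover, in this case both $A$ and $A^{\#}$ are range monotone.
   Context: The group inverse $A^{\#}$ of a square $A$ is the unique $X$ (if it exists) with $AXA=A$, $XAX=X$, $AX=XA$. A square matrix $M$ is range monotone if $Mx\ge 0$ and $x\in R(M)$ imply $x\ge 0$. For $A\in\mathbb{R}^{n\times n}$ let $K_A=\mathbb{R}^n_+\cap R(A)$ and $K_A^*=\{y\in\mathbb{R}^n: x^Ty\ge 0 \text{ for all } x\in K_A\}$ (one has $K_A^*=\mathbb{R}^n_++N(A^T)$, and its interior is $\{a+b: a>0,\ b\in N(A^T)\}$). For $q\in\mathbb{R}^n$, LCP$(A,K_A,q)$ is to find $x$ with $x\in K_A$, $Ax+q\in K_A^*$, $x^T(Ax+q)=0$. $A$ is a Karamardian matrix if $K_A\ne\{0\}$ and there exists $d$ in the interior of $K_A^*$ such that both LCP$(A,K_A,0)$ and LCP$(A,K_A,d)$ have $x=0$ as their only solution. *)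

From mathcomp Require Import all_boot all_order all_algebra.
From mathcomp Require Import reals.
Set Implicit Arguments. Unset Strict Implicit. Unset Printing Implicit Defensive.
Import Order.TTheory GRing.Theory Num.Theory.
Local Open Scope ring_scope.

Section KaramardianDefs.
Variables (R : realType) (n : nat).

Definition nonneg_vec (x : 'cV[R]_n) : Prop := forall i, 0 <= x i 0.
Definition pos_vec (x : 'cV[R]_n) : Prop := forall i, 0 < x i 0.
Definition in_range (A : 'M[R]_n) (x : 'cV[R]_n) : Prop :=
  exists y : 'cV[R]_n, x = A *m y.
Definition in_null_tr (A : 'M[R]_n) (b : 'cV[R]_n) : Prop := A^T *m b = 0.

Definition is_group_inverse (A X : 'M[R]_n) : Prop :=
  A *m X *m A = A /\ X *m A *m X = X /\ A *m X = X *m A.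

Definition range_monotone (M : 'M[R]_n) : Prop :=
  forall x : 'cV[R]_n, nonneg_vec (M *m x) -> in_range M x -> nonneg_vec x.

Definition in_KA (A : 'M[R]_n) (x : 'cV[R]_n) : Prop :=
  nonneg_vec x /\ in_range A x.
Definition in_KA_dual (A : 'M[R]_n) (y : 'cV[R]_n) : Prop :=
  forall x, in_KA A x -> 0 <= (x^T *m y) 0 0.
(* interior of K_A^*, as given in the paper: {a + b : a > 0, b ∈ N(A^T)} *)
Definition in_int_KA_dual (A : 'M[R]_n) (d : 'cV[R]_n) : Prop :=
  exists a b : 'cV[R]_n, pos_vec a /\ in_null_tr A b /\ d = a + b.

Definition solves_LCP (A : 'M[R]_n) (q x : 'cV[R]_n) : Prop :=
  in_KA A x /\ in_KA_dual A (A *m x + q) /\ (x^T *m (A *m x + q)) 0 0 = 0.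

Definition karamardian (A : 'M[R]_n) : Prop :=
  (exists x, in_KA A x /\ x <> 0) /\
  exists d, in_int_KA_dual A d /\
    (forall x, solves_LCP A 0 x -> x = 0) /\
    (forall x, solves_LCP A d x -> x = 0).

End KaramardianDefs.

From mathcomp Require Import all_boot all_order all_algebra.
From mathcomp Require Import reals.
From mathcomp Require Import ring.
Import Order.TTheory GRing.Theory Num.Theory.
Set Implicit Arguments. Unset Strict Implicit. Unset Printing Implicit Defensive.
Local Open Scope ring_scope.

(* A rank-one matrix factors as A = u w^T, hence A^2 = c A
   with c = w^T u, and its range is the line spanned by u.  For any matrix
   with A^2 = c A and A <> 0:
   - a group inverse exists iff c <> 0, and it is then X = c^-2 A;
   - A acts on its range as multiplication by c, so A is range monotone as
     soon as c > 0.
   If moreover R(A) is a line and A is Karamardian, then c > 0: for c = 0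
   every nonzero x in K_A solves LCP(A, K_A, 0), and for c < 0 a suitable
   positive multiple of such an x solves LCP(A, K_A, d).  Finally, being
   Karamardian and being range monotone are invariant under multiplication
   by a positive scalar, which transfers both properties from A to
   X = c^-2 A and back. *)

Section InnerProduct.
Variables (R : realType) (n : nat).
Implicit Types (A : 'M[R]_n) (x y z b : 'cV[R]_n).

Definition dot x y : R := (x^T *m y) 0 0.

Lemma dotE x y : dot x y = \sum_i x i 0 * y i 0.
Proof. by rewrite /dot mxE; apply: eq_bigr => i _; rewrite mxE. Qed.

Lemma dotZl (k : R) x y : dot (k *: x) y = k * dot x y.
Proof. by rewrite !dotE mulr_sumr; apply: eq_bigr => i _; rewrite mxE mulrA. Qed.

Lemma dotZr (k : R) x y : dot x (k *: y) = k * dot x y.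
Proof. by rewrite !dotE mulr_sumr; apply: eq_bigr => i _; rewrite mxE mulrCA. Qed.

Lemma dotDr x y z : dot x (y + z) = dot x y + dot x z.
Proof. by rewrite !dotE -big_split; apply: eq_bigr => i _; rewrite mxE mulrDr. Qed.

Lemma dot0r x : dot x 0 = 0.
Proof. by rewrite dotE big1 // => i _; rewrite mxE mulr0. Qed.

Lemma dot_gt0 x y i : nonneg_vec x -> nonneg_vec y -> 0 < x i 0 -> 0 < y i 0 ->
  0 < dot x y.
Proof.
move=> x_ge0 y_ge0 xi_gt0 yi_gt0; rewrite dotE (bigD1 i) //=.
have rest_ge0 : 0 <= \sum_(j | j != i) x j 0 * y j 0.
  by apply: sumr_ge0 => j _; apply: mulr_ge0.
by apply: ltr_wpDr rest_ge0 (mulr_gt0 xi_gt0 yi_gt0).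
Qed.

Lemma nonneg_neq0_pos z : nonneg_vec z -> z <> 0 -> exists i, 0 < z i 0.
Proof.
move=> z_ge0 z_neq0; have [i zi_gt0|zi_le0] := pickP (fun i => 0 < z i 0).
  by exists i.
exfalso; apply: z_neq0; apply/matrixP => i j; rewrite (ord1 j) mxE.
apply/eqP; rewrite eq_le z_ge0 andbT leNgt; exact/negbT/zi_le0.
Qed.

Lemma range_orth_null_tr A x b : in_range A x -> in_null_tr A b -> dot x b = 0.
Proof.
by move=> [y ->] Ab0; rewrite /dot trmx_mul -mulmxA Ab0 mulmx0 mxE.
Qed.

(* If x lies in K_A and A x + q is orthogonal to R(A), then x solves
   LCP(A, K_A, q): A x + q is then in K_A^*, and complementarity holds since
   x itself lies in R(A). *)
Lemma orth_range_solves_LCP A q x : in_KA A x ->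
  (forall w, in_range A w -> dot w (A *m x + q) = 0) -> solves_LCP A q x.
Proof.
move=> x_KA orth; split=> //; split; last exact: orth x_KA.2.
by move=> w [_ /orth w_orth]; rewrite -/(dot w _) w_orth.
Qed.

End InnerProduct.

(* Multiplying A by k > 0 changes neither R(A), K_A nor the solution sets
   of the LCPs (up to scaling q), hence preserves the Karamardian property
   and range monotonicity. *)
Section PositiveScaling.
Variables (R : realType) (n : nat) (A : 'M[R]_n) (k : R).
Hypothesis k_gt0 : 0 < k.

Let k_neq0 : k != 0. Proof. by rewrite gt_eqF. Qed.

Lemma range_scale x : in_range (k *: A) x <-> in_range A x.
Proof.
split => -[y ->]; first by exists (k *: y); rewrite -scalemxAl scalemxAr.
by exists (k^-1 *: y); rewrite -scalemxAl -scalemxAr scalerA mulfV // scale1r.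
Qed.

Lemma KA_scale x : in_KA (k *: A) x <-> in_KA A x.
Proof. by split => -[x_ge0 x_rng]; split => //; apply/range_scale. Qed.

Lemma LCP_scale q x : solves_LCP (k *: A) (k *: q) x -> solves_LCP A q x.
Proof.
rewrite /solves_LCP.
have -> : (k *: A) *m x + k *: q = k *: (A *m x + q).
  by rewrite -scalemxAl scalerDr.
rewrite -/(dot x _) dotZr => -[x_KA [dual compl]].
split; first exact/KA_scale.
split; last by move/eqP: compl; rewrite mulf_eq0 (negbTE k_neq0) => /eqP.
move=> w /KA_scale /dual; rewrite -!/(dot _ _) dotZr.
by rewrite pmulr_rge0.
Qed.

Lemma karamardian_scale : karamardian A -> karamardian (k *: A).
Proof.
move=> [[z [z_KA z_neq0]] [d [[a [b [a_gt0 [b_null ->]]]] [uniq0 uniqd]]]].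
split; first by exists z; split => //; apply/KA_scale.
exists (k *: (a + b)); split.
  exists (k *: a), (k *: b); split; first by move=> i; rewrite mxE mulr_gt0.
  split; last by rewrite scalerDr.
  rewrite /in_null_tr.
  have -> : (k *: A)^T = k *: A^T by apply/matrixP => i j; rewrite !mxE.
  by rewrite -scalemxAl -scalemxAr b_null !scaler0.
split => x x_sol; [apply: uniq0 | apply: uniqd]; apply: LCP_scale => //.
by rewrite scaler0.
Qed.

Lemma range_monotone_scale : range_monotone A -> range_monotone (k *: A).
Proof.
move=> A_mono x kAx_ge0 /range_scale x_rng; apply: A_mono x_rng => i.
by have := kAx_ge0 i; rewrite -scalemxAl mxE pmulr_rge0.
Qed.

End PositiveScaling.

Lemma karamardian_scale_iff (R : realType) (n : nat) (A : 'M[R]_n) (k : R) :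
  0 < k -> karamardian (k *: A) <-> karamardian A.
Proof.
move=> k_gt0; split; last exact: karamardian_scale.
have kV_gt0 : 0 < k^-1 by rewrite invr_gt0.
move=> /(karamardian_scale kV_gt0).
by rewrite scalerA mulVf ?scale1r // gt_eqF.
Qed.

(* Matrices satisfying A^2 = c A: every rank-one matrix is of this kind. *)
Section SquareMultiple.
Variables (R : realType) (n : nat) (A : 'M[R]_n) (c : R).
Hypothesis sqA : A *m A = c *: A.

Lemma mul_range x : in_range A x -> A *m x = c *: x.
Proof. by move=> [y ->]; rewrite mulmxA sqA scalemxAl. Qed.

Lemma group_inverse_sqmul : c != 0 -> is_group_inverse A (c^-2 *: A).
Proof.
move=> c_neq0.
have AX : A *m (c^-2 *: A) = c^-1 *: A.
  by rewrite -scalemxAr sqA scalerA; congr (_ *: _); field.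
have XA : (c^-2 *: A) *m A = c^-1 *: A.
  by rewrite -scalemxAl sqA scalerA; congr (_ *: _); field.
split; first by rewrite AX -scalemxAl sqA scalerA mulVf ?scale1r.
split; last by rewrite AX XA.
by rewrite XA -scalemxAl AX scalerA; congr (_ *: _); field.
Qed.

Lemma group_inverse_sqmulE X : A <> 0 -> is_group_inverse A X ->
  c != 0 /\ X = c^-2 *: A.
Proof.
move=> A_neq0 [AXA [XAX AX_XA]].
have AXA_c : A *m X *m A = c *: (A *m X).
  by rewrite -mulmxA -AX_XA mulmxA sqA scalemxAl.
have c_neq0 : c != 0.
  by apply/eqP => c0; apply: A_neq0; rewrite -AXA AXA_c c0 scale0r.
have AX : A *m X = c^-1 *: A.
  by rewrite -{2}AXA AXA_c scalerA mulVf ?scale1r.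
split => //.
by rewrite -XAX -AX_XA AX -scalemxAl AX scalerA -invfM -expr2.
Qed.

(* If c > 0, then A x >= 0 with x in R(A) means c x >= 0, i.e. x >= 0. *)
Lemma range_monotone_sqmul : 0 < c -> range_monotone A.
Proof.
move=> c_gt0 x Ax_ge0 /mul_range Ax i.
by have := Ax_ge0 i; rewrite Ax mxE pmulr_rge0.
Qed.

(* For c = 0 every vector of K_A solves LCP(A, K_A, 0). *)
Lemma karamardian_sqmul_neq0 : karamardian A -> c != 0.
Proof.
move=> [[z [z_KA z_neq0]] [_ [_ [uniq0 _]]]].
apply/eqP => c0; apply: z_neq0; apply: uniq0; apply: orth_range_solves_LCP => //.
by move=> w _; rewrite addr0 (mul_range z_KA.2) c0 scale0r dot0r.
Qed.

(* When R(A) is a line, a Karamardian A has c > 0: for c < 0 a positive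
   multiple of a nonzero z in K_A would solve LCP(A, K_A, d). *)
Lemma karamardian_sqmul_gt0 (u : 'cV[R]_n) :
  (forall x, in_range A x -> exists t, x = t *: u) -> karamardian A -> 0 < c.
Proof.
move=> line K; have c_neq0 := karamardian_sqmul_neq0 K.
move: K => [[z [[z_ge0 z_rng] z_neq0]] [d [[a [b [a_gt0 [b_null d_ab]]]] [_ uniqd]]]].
rewrite lt_def c_neq0 /= leNgt; apply/negP => c_lt0.
have [i zi_gt0] := nonneg_neq0_pos z_ge0 z_neq0.
have line_z w : in_range A w -> exists s, w = s *: z.
  move=> /line [t ->]; have [s zs] := line z z_rng.
  have s_neq0 : s != 0 by apply/eqP => s0; apply: z_neq0; rewrite zs s0 scale0r.
  by exists (t / s); rewrite zs scalerA divfK.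
have zd_gt0 : 0 < dot z d.
  rewrite d_ab dotDr (range_orth_null_tr z_rng b_null) addr0.
  by apply: dot_gt0 zi_gt0 (a_gt0 i) => // j; apply: ltW.
have zz_gt0 : 0 < dot z z := dot_gt0 z_ge0 z_ge0 zi_gt0 zi_gt0.
pose tau := - dot z d / (c * dot z z).
have tau_gt0 : 0 < tau.
  by rewrite /tau mulrC nmulr_rgt0 ?invr_lt0 ?nmulr_rlt0 // oppr_lt0.
have orth : dot z (A *m (tau *: z) + d) = 0.
  rewrite -scalemxAr (mul_range z_rng) dotDr !dotZr /tau.
  by field; rewrite c_neq0 gt_eqF.
have tauz_KA : in_KA A (tau *: z).
  split; first by move=> j; rewrite mxE mulr_ge0 // ltW.
  by move: z_rng => [y ->]; exists (tau *: y); rewrite scalemxAr.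
have tauz_sol : solves_LCP A d (tau *: z).
  apply: orth_range_solves_LCP tauz_KA _ => w /line_z [s ->].
  by rewrite dotZl orth mulr0.
have /eqP := uniqd _ tauz_sol.
by rewrite scaler_eq0 gt_eqF //= => /eqP.
Qed.

End SquareMultiple.

(* A rank-one matrix A = u w^T satisfies A^2 = (w^T u) A and has range
   spanned by u. *)
Lemma rank_one_factor (R : realType) (n : nat) (A : 'M[R]_n) :
  \rank A = 1%N -> exists (c : R) (u : 'cV[R]_n),
  [/\ A *m A = c *: A, A <> 0 & forall x, in_range A x -> exists t, x = t *: u].
Proof.
move=> rk1.
have A_neq0 : A <> 0 by move=> A0; move: rk1; rewrite A0 mxrank0.
have : exists (u : 'M[R]_(n, \rank A)) (w : 'M[R]_(\rank A, n)), A = u *m w.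
  by exists (col_base A), (row_base A); rewrite mulmx_base.
rewrite rk1 => -[u [w A_uw]].
exists ((w *m u) 0 0), u; split.
- by rewrite A_uw mulmxA -(mulmxA u) {1}[w *m u]mx11_scalar mul_mx_scalar -scalemxAl.
- exact: A_neq0.
- move=> x [y ->]; exists ((w *m y) 0 0).
  by rewrite A_uw -mulmxA {1}[w *m y]mx11_scalar mul_mx_scalar.
Qed.

Theorem mainTheorem7 (R : realType) (n : nat) (A : 'M[R]_n) :
  \rank A = 1%N ->
  (karamardian A -> exists X : 'M[R]_n, is_group_inverse A X) /\
  (forall X : 'M[R]_n, is_group_inverse A X ->
     (karamardian A <-> karamardian X) /\
     (karamardian A -> range_monotone A /\ range_monotone X)).
Proof.
move=> rk1; have [c [u [sqA A_neq0 line]]] := rank_one_factor rk1.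
split=> [K|X ginvX].
  exists (c^-2 *: A); apply: (group_inverse_sqmul sqA).
  exact: (karamardian_sqmul_neq0 sqA).
have [c_neq0 ->] := group_inverse_sqmulE sqA A_neq0 ginvX.
have c2_gt0 : 0 < c^-2 by rewrite invr_gt0 exprn_even_gt0.
split; first exact: iff_sym (karamardian_scale_iff A c2_gt0).
move=> K; have A_mono := range_monotone_sqmul sqA (karamardian_sqmul_gt0 sqA line K).
by split; last exact: range_monotone_scale.
Qed.
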